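(* Let $G$ be a connected edge-stable equimatchable graph with at least $3$ vertices. Then $\nu(G)=\nu(G\setminus e)$ for every $e\in E(G)$.
   Context: All graphs are finite and simple. A graph is equimatchable if all its maximal matchings have the same cardinality; an equimatchable graph $G$ is edge-stable if $G\setminus e$ (delete edge $e$, keep vertices) is equimatchable for every $e\in E(G)$. $\nu(H)$ is the maximum size of a matching of $H$. *)

(* A finite simple graph on vertex type V is given by its
   edge set E : {set {set V}}, every edge being a 2-element vertex set. *)
From mathcomp Require Import all_boot all_order.
Set Implicit Arguments. Unset Strict Implicit. Unset Printing Implicit Defensive.

Section Graphs.
Variable V : finType.

Definition simple_graph (E : {set {set V}}) : Prop :=
  forall e, e \in E -> #|e| = 2.

Definition adj (E : {set {set V}}) : rel V :=
  fun x y => (x != y) && ([set x; y] \in E).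

Definition connected_graph (E : {set {set V}}) : Prop :=
  forall x y : V, connect (adj E) x y.

Definition matchingb (E M : {set {set V}}) : bool :=
  (M \subset E) &&
  [forall e in M, forall f in M, (e != f) ==> [disjoint e & f]].

Definition matching (E M : {set {set V}}) : Prop := matchingb E M.

Definition maximal_matching (E M : {set {set V}}) : Prop :=
  matching E M /\ (forall f, f \in E -> f \notin M -> ~ matching E (f |: M)).

Definition nu (E : {set {set V}}) : nat :=
  \max_(M : {set {set V}} | matchingb E M) #|M|.

Definition equimatchable (E : {set {set V}}) : Prop :=
  forall M1 M2, maximal_matching E M1 -> maximal_matching E M2 -> #|M1| = #|M2|.

Definition edge_stable (E : {set {set V}}) : Prop :=
  equimatchable E /\ forall e, e \in E -> equimatchable (E :\ e).

End Graphs.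

(* Pick an edge f sharing exactly one endpoint with e; it exists because G is
   connected and has a vertex outside e.  A maximal matching through f avoids
   e, so it is a matching of G \ e, and by equimatchability it is as large as a
   maximum matching of G.  Hence nu(G) <= nu(G \ e) <= nu(G). *)
From mathcomp Require Import all_boot all_order.
Set Implicit Arguments. Unset Strict Implicit. Unset Printing Implicit Defensive.

Lemma connect_exit (T : finType) (r : rel T) (A : {set T}) x y :
  connect r x y -> x \in A -> y \notin A ->
  exists a b, [/\ a \in A, b \notin A & r a b].
Proof.
move/connectP=> [p]; elim: p x => [|z p IH] x /=; first by move=> _ -> ->.
move=> /andP[rxz pz] ly xA yA.
case zA: (z \in A); first exact: IH pz ly zA yA.
by exists x, z; rewrite zA.
Qed.

Section Matchings.
Variable V : finType.
Implicit Types (E M N : {set {set V}}) (e f : {set V}).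

Lemma matchingb0 E : matchingb E set0.
Proof.
by apply/andP; split; [apply: sub0set | apply/forallP=> g; rewrite inE].
Qed.

Lemma matchingb1 E f : f \in E -> matchingb E [set f].
Proof.
move=> fE; apply/andP; split; first by rewrite sub1set.
by apply/forall_inP=> g /set1P->; apply/forall_inP=> h /set1P->; rewrite eqxx.
Qed.

Lemma matchingb_disjoint E M e f :
  matchingb E M -> e \in M -> f \in M -> e != f -> [disjoint e & f].
Proof.
case/andP=> _ /forall_inP pM eM fM.
by move/forall_inP: (pM e eM) => /(_ f fM)/implyP.
Qed.

Lemma matchingbD1 E M e :
  matchingb E M -> e \notin M -> matchingb (E :\ e) M.
Proof.
case/andP=> sME pM eM; apply/andP; split=> //.
apply/subsetP=> g gM; rewrite in_setD1 (subsetP sME _ gM) andbT.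
by apply: contraNneq eM => <-.
Qed.

Lemma matchingb_subgraph E E' M :
  E' \subset E -> matchingb E' M -> matchingb E M.
Proof. by move=> sE' /andP[sM pM]; rewrite /matchingb (subset_trans sM sE'). Qed.

Lemma leq_card_nu E M : matchingb E M -> #|M| <= nu E.
Proof. exact: leq_bigmax_cond. Qed.

Lemma nu_subgraph E E' : E' \subset E -> nu E' <= nu E.
Proof.
move=> sE'; apply/bigmax_leqP=> M mM.
exact/leq_card_nu/(matchingb_subgraph sE').
Qed.

(* A largest matching among those extending M0 is maximal, since adding an edge
   keeps it an extension of M0. *)
Lemma maximal_matching_extension E M0 : matchingb E M0 ->
  exists N, [/\ maximal_matching E N, M0 \subset N &
    forall N', matchingb E N' -> M0 \subset N' -> #|N'| <= #|N| ].
Proof.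
move=> mM0; have mM0' : matchingb E M0 && (M0 \subset M0) by rewrite mM0 subxx.
have [N /andP[mN sN] Nmax] :=
  @arg_maxnP _ M0 (fun N => matchingb E N && (M0 \subset N)) (fun N => #|N|)
             mM0'.
exists N; split=> [|//|N' mN' sN']; last by apply: Nmax; rewrite mN' sN'.
split=> // g gE gN mg.
have := Nmax (g |: N); rewrite mg (subset_trans sN (subsetUr _ _)).
by rewrite cardsU1 gN => /(_ isT) /=; rewrite add1n ltnn.
Qed.

Lemma maximum_maximal_matching E :
  exists M, maximal_matching E M /\ #|M| = nu E.
Proof.
have [M [maxM _ Mmax]] := maximal_matching_extension (matchingb0 E).
exists M; split=> //; apply/eqP.
rewrite eqn_leq leq_card_nu; last by case: maxM.
by apply/bigmax_leqP=> N mN; apply: Mmax; rewrite ?sub0set.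
Qed.

Lemma maximal_matching_through E f :
  f \in E -> exists M, maximal_matching E M /\ f \in M.
Proof.
move=> fE; have [M [maxM sfM _]] := maximal_matching_extension (matchingb1 fE).
by exists M; rewrite -sub1set.
Qed.

Lemma exists_incident_edge E e :
  simple_graph E -> connected_graph E -> 2 < #|V| -> e \in E ->
  exists f, [/\ f \in E, f != e & ~~ [disjoint e & f]].
Proof.
move=> sE cE cV eE; have /cards2P[u [v [_ def_e]]] : #|e| == 2 by rewrite sE.
have [w] : exists w, w \in ~: e.
  by apply/card_gt0P; rewrite cardsCs setCK sE // subn_gt0.
rewrite in_setC => we; have ue : u \in e by rewrite def_e set21.
have [a [b [ae be /andP[_ abE]]]] := connect_exit (cE u w) ue we.
exists [set a; b]; split=> //.
  by apply: contraNneq be => <-; rewrite set22.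
by apply/pred0Pn; exists a; rewrite /= ae set21.
Qed.

End Matchings.

Theorem proposition2p1 (V : finType) (E : {set {set V}}) :
  simple_graph E -> connected_graph E -> 3 <= #|V| -> edge_stable E ->
  forall e, e \in E -> nu E = nu (E :\ e).
Proof.
move=> sE cE cV [eqE _] e eE.
have [f [fE fe meet_ef]] := exists_incident_edge sE cE cV eE.
have [M0 [maxM0 nuE]] := maximum_maximal_matching E.
have [M1 [maxM1 fM1]] := maximal_matching_through fE.
have eM1 : e \notin M1.
  apply: contraNN meet_ef => eM1.
  by case: maxM1 => mM1 _; rewrite (matchingb_disjoint mM1 eM1 fM1) // eq_sym.
apply/eqP; rewrite eqn_leq (nu_subgraph (subD1set E e)) andbT.
rewrite -nuE (eqE _ _ maxM0 maxM1).
by case: maxM1 => mM1 _; exact/leq_card_nu/matchingbD1.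
Qed.
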